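(* Let $r>0$, $\varepsilon\in(0,1)$, $n\geq 1$ an integer, and $T\subset rB_2^d$ with $|T|\geq(\frac{2}{\varepsilon}+1)^n$. Then there exist vectors $t_k,s_k\in T$ and $u_k,v_k\in\mathbb{R}^d$, $k=1,\dots,n$, such that for every $k$, $0\neq t_k-s_k=u_k+v_k$ and $|v_k|\leq\varepsilon r$, and the vectors $u_1,\dots,u_n$ are pairwise orthogonal.
   Context: $B_2^d$ is the Euclidean unit ball in $\mathbb{R}^d$, $|\cdot|$ the Euclidean norm, $|T|$ the cardinality of $T$. *)

From mathcomp Require Import all_boot.
From Stdlib Require Import Reals List.

Definition vec (d : nat) := 'I_d -> R.

Definition vadd {d} (x y : vec d) : vec d := fun i => (x i + y i)%R.
Definition vsub {d} (x y : vec d) : vec d := fun i => (x i - y i)%R.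

Definition dot {d} (x y : vec d) : R := \big[Rplus/0%R]_(i < d) (x i * y i)%R.
Definition enorm {d} (x : vec d) : R := sqrt (dot x x).

(* |T| >= N for a (possibly infinite) set T : T contains at least N distinct
   points, i.e. some duplicate-free list of points of T has length >= N. *)
Definition card_ge {A : Type} (T : A -> Prop) (N : R) : Prop :=
  exists l : list A, NoDup l /\ (forall x, In x l -> T x) /\ (N <= INR (length l))%R.

(* The pairs are built one at a time.  Given orthogonal u_1, ..., u_m with
   m < n, map T to the coordinates of its orthogonal projection onto
   E = span(u_1, ..., u_m), a subset of the ball of radius r in R^m.  Points
   of that ball at pairwise distance > eps r number fewer than
   ((2r + eps r) / (eps r))^(m+1) = (2/eps + 1)^(m+1) <= |T|, so two points
   t <> s of T have projections at distance <= eps r; then v = P_E (t - s)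
   and u = (t - s) - v, which is orthogonal to E, extend the family.

   The packing bound is proved without volumes: counting grid cells gives a
   crude bound, and a tensor-power trick (applying it to the N^k points
   encoding words of length k) sharpens it to exponent m + 1 as k grows. *)

From HB Require Import structures.
From mathcomp Require Import all_boot.
From Stdlib Require Import Reals List Lra Lia Psatz FunctionalExtensionality Classical.
From Stdlib Require Znat.
Open Scope R_scope.
Set Implicit Arguments.
Unset Strict Implicit.

Lemma Rplus_assoc_law : associative Rplus.
Proof. by move=> x y z; rewrite Rplus_assoc. Qed.

HB.instance Definition _ :=
  Monoid.isComLaw.Build R 0 Rplus Rplus_assoc_law Rplus_comm Rplus_0_l.

Section Sums.
Variables (Idx : Type) (s : list Idx) (P : pred Idx).

Lemma sum_ge0 (F : Idx -> R) :
  (forall i, P i -> 0 <= F i) -> 0 <= \big[Rplus/0]_(i <- s | P i) F i.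
Proof. by move=> HF; apply: big_ind => // [|x y]; lra. Qed.

Lemma sum_le (F G : Idx -> R) : (forall i, P i -> F i <= G i) ->
  \big[Rplus/0]_(i <- s | P i) F i <= \big[Rplus/0]_(i <- s | P i) G i.
Proof. by move=> HFG; apply: (big_ind2 Rle) => // [|x1 x2 y1 y2]; lra. Qed.

Lemma sum_scal (c : R) (F : Idx -> R) :
  \big[Rplus/0]_(i <- s | P i) (c * F i) = c * \big[Rplus/0]_(i <- s | P i) F i.
Proof. by apply: (big_ind2 (fun a b => a = c * b)) => [|a1 b1 a2 b2 -> ->|i _]; ring. Qed.
End Sums.

Lemma sum_term_le d (F : 'I_d -> R) (i : 'I_d) :
  (forall j, 0 <= F j) -> F i <= \big[Rplus/0]_(j < d) F j.
Proof.
move=> HF; rewrite (bigD1 i) //=; set rest := \big[Rplus/0]_(j < d | j != i) F j.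
have : 0 <= rest by apply: sum_ge0.
lra.
Qed.

Lemma sum_single d (F : 'I_d -> R) (k : 'I_d) :
  (forall i, i != k -> F i = 0) -> \big[Rplus/0]_(i < d) F i = F k.
Proof. by move=> HF; rewrite (bigD1 k) //= big1 ?Rplus_0_r. Qed.

Lemma sum_const d (c : R) : \big[Rplus/0]_(i < d) c = INR d * c.
Proof.
rewrite big_const_ord; elim: d => [|d IH]; first by rewrite /=; ring.
by rewrite iterS IH S_INR; ring.
Qed.

Lemma le_of_sq_le a b : 0 <= b -> a * a <= b * b -> a <= b.
Proof. nra. Qed.

Lemma Rabs_sq a : Rabs a * Rabs a = a * a.
Proof. by rewrite -Rabs_mult Rabs_pos_eq //; nra. Qed.

Definition vzero {d} : vec d := fun _ => 0.
Definition vscal {d} (c : R) (x : vec d) : vec d := fun i => c * x i.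

Section Euclid.
Variable d : nat.
Implicit Types x y z : vec d.

Lemma dot_comm x y : dot x y = dot y x.
Proof. by apply: eq_bigr => i _; rewrite Rmult_comm. Qed.

Lemma dot_addl x y z : dot (vadd x y) z = dot x z + dot y z.
Proof. by rewrite /dot -big_split; apply: eq_bigr => i _; rewrite /vadd Rmult_plus_distr_r. Qed.

Lemma dot_scall c x y : dot (vscal c x) y = c * dot x y.
Proof. by rewrite /dot -sum_scal; apply: eq_bigr => i _; rewrite /vscal Rmult_assoc. Qed.

Lemma dot_subl x y z : dot (vsub x y) z = dot x z - dot y z.
Proof.
have -> : dot x z - dot y z = dot x z + -1 * dot y z by ring.
by rewrite /dot -sum_scal -big_split; apply: eq_bigr => i _ /=; rewrite /vsub; ring.
Qed.

Lemma dot_ge0 x : 0 <= dot x x.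
Proof. by apply: sum_ge0 => i _; nra. Qed.

Lemma coord_sq_le x i : x i * x i <= dot x x.
Proof. by rewrite /dot; apply: (@sum_term_le d (fun j => x j * x j) i) => j; nra. Qed.

Lemma dot_eq0 x : dot x x = 0 -> forall i, x i = 0.
Proof. by move=> Hx i; have := coord_sq_le x i; nra. Qed.

Lemma dot_vadd_sq x y :
  dot (vadd x y) (vadd x y) = dot x x + 2 * dot x y + dot y y.
Proof. by rewrite dot_addl !(dot_comm _ (vadd x y)) !dot_addl (dot_comm y x); ring. Qed.

Lemma dot_vsub_sq x y :
  dot (vsub x y) (vsub x y) = dot x x - 2 * dot x y + dot y y.
Proof. by rewrite dot_subl !(dot_comm _ (vsub x y)) !dot_subl (dot_comm y x); ring. Qed.

(* Cauchy-Schwarz, from the nonnegativity of |<y,y> x - <x,y> y|^2. *)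
Lemma cauchy_schwarz x y : dot x y * dot x y <= dot x x * dot y y.
Proof.
have [yy_pos|yy0] : 0 < dot y y \/ 0 = dot y y by have := dot_ge0 y; lra.
- have := dot_ge0 (vsub (vscal (dot y y) x) (vscal (dot x y) y)).
  rewrite dot_vsub_sq !dot_scall !(dot_comm _ (vscal _ _)) !dot_scall (dot_comm y x).
  nra.
- have y0 := dot_eq0 (esym yy0).
  have -> : dot x y = 0 by rewrite /dot big1 // => i _; rewrite y0 Rmult_0_r.
  by rewrite -yy0; nra.
Qed.

Lemma enorm_ge0 x : 0 <= enorm x.
Proof. exact: sqrt_pos. Qed.

Lemma enorm_sq x : enorm x * enorm x = dot x x.
Proof. exact/sqrt_sqrt/dot_ge0. Qed.

Lemma abs_dot_le x y : Rabs (dot x y) <= enorm x * enorm y.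
Proof.
apply: le_of_sq_le; first by have := enorm_ge0 x; have := enorm_ge0 y; nra.
rewrite Rabs_sq; have := cauchy_schwarz x y.
by rewrite -(enorm_sq x) -(enorm_sq y); nra.
Qed.

Lemma enorm_add_le x y : enorm (vadd x y) <= enorm x + enorm y.
Proof.
apply: le_of_sq_le; first by have := enorm_ge0 x; have := enorm_ge0 y; lra.
rewrite enorm_sq dot_vadd_sq -(enorm_sq x) -(enorm_sq y).
have := abs_dot_le x y; have := Rle_abs (dot x y); nra.
Qed.

Lemma enorm_sub_le x y : enorm (vsub x y) <= enorm x + enorm y.
Proof.
apply: le_of_sq_le; first by have := enorm_ge0 x; have := enorm_ge0 y; lra.
rewrite enorm_sq dot_vsub_sq -(enorm_sq x) -(enorm_sq y).
have := abs_dot_le x y; have := Rle_abs (- dot x y); rewrite Rabs_Ropp; nra.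
Qed.

Lemma enorm_add_ge x y : enorm x - enorm y <= enorm (vadd x y).
Proof.
have [|gt_xy] := Rle_or_lt (enorm x) (enorm y); first by have := enorm_ge0 (vadd x y); lra.
apply: le_of_sq_le; first exact: enorm_ge0.
rewrite enorm_sq dot_vadd_sq -(enorm_sq x) -(enorm_sq y).
have := abs_dot_le x y; have := Rle_abs (- dot x y); rewrite Rabs_Ropp; nra.
Qed.

Lemma enorm_scal c x : enorm (vscal c x) = Rabs c * enorm x.
Proof.
rewrite /enorm dot_scall (dot_comm x) dot_scall -Rmult_assoc sqrt_mult_alt; last by nra.
by rewrite -sqrt_Rsqr_abs.
Qed.

Lemma enorm_zero : enorm (@vzero d) = 0.
Proof. by rewrite /enorm /dot big1 ?sqrt_0 // => i _; rewrite /vzero Rmult_0_l. Qed.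

Lemma coord_le x i : Rabs (x i) <= enorm x.
Proof.
apply: le_of_sq_le; first exact: enorm_ge0.
by rewrite Rabs_sq enorm_sq; apply: coord_sq_le.
Qed.

Lemma dot_le_box x h : (forall i, Rabs (x i) <= h) -> dot x x <= INR d * (h * h).
Proof.
move=> Hx; rewrite -sum_const; apply: sum_le => i _.
by rewrite -Rabs_sq; have := Hx i; have := Rabs_pos (x i); nra.
Qed.
End Euclid.

Lemma INR_expn a b : INR (expn a b) = INR a ^ b.
Proof. by elim: b => [|b IH] //=; rewrite expnS -multE mult_INR IH. Qed.

Lemma abs_le_bounds a b : Rabs a <= b -> - b <= a <= b.
Proof. by move=> Hab; have := Rle_abs a; have := Rle_abs (- a); rewrite Rabs_Ropp; lra. Qed.

Lemma div_ge0 a b : 0 <= a -> 0 < b -> 0 <= a / b.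
Proof. by move=> Ha Hb; apply: Rmult_le_pos => //; exact/Rlt_le/Rinv_0_lt_compat. Qed.

Lemma pow_le1 x n : 0 <= x <= 1 -> x ^ n <= 1.
Proof. by move=> Hx; elim: n => [|n IH] /=; [lra | have := pow_le x n; nra]. Qed.

Lemma up_pos a : 0 <= a -> (0 < up a)%Z.
Proof. by move=> Ha; have [Hup _] := archimed a; apply: lt_IZR; lra. Qed.

Lemma up_le a b : a <= b -> (up a <= up b)%Z.
Proof.
move=> Hab; have [Ha1 Ha2] := archimed a; have [Hb1 Hb2] := archimed b.
have : (up a < up b + 1)%Z by apply: lt_IZR; rewrite plus_IZR; lra.
lia.
Qed.

Lemma INR_up a : 0 <= a -> INR (Z.to_nat (up a)) = IZR (up a).
Proof. by move=> Ha; rewrite INR_IZR_INZ Znat.Z2Nat.id //; have := up_pos Ha; lia. Qed.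

Section Cells.
Variables (B h : R).
Hypotheses (hB : 0 < B) (hh : 0 < h).

Definition cell (a : R) : nat := Z.to_nat (up ((a + B) / h)).
Definition ncells : nat := (Z.to_nat (up (2 * B / h))).+1.

Lemma cell_lt a : Rabs a <= B -> (cell a < ncells)%nat.
Proof.
move=> /abs_le_bounds Ha; rewrite ltnS /cell.
have Hpos : 0 <= (a + B) / h by apply: div_ge0; lra.
have Hle : (a + B) / h <= 2 * B / h.
  by apply: Rmult_le_compat_r; [apply/Rlt_le/Rinv_0_lt_compat | lra].
have := up_le Hle; have := up_pos Hpos; move=> *; apply/leP; lia.
Qed.

Lemma cell_close a a' : Rabs a <= B -> Rabs a' <= B -> cell a = cell a' -> Rabs (a - a') < h.
Proof.
move=> /abs_le_bounds Ha /abs_le_bounds Ha' Hcell.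
have Hpos : 0 <= (a + B) / h by apply: div_ge0; lra.
have Hpos' : 0 <= (a' + B) / h by apply: div_ge0; lra.
have Hup : up ((a + B) / h) = up ((a' + B) / h).
  by move: Hcell; rewrite /cell; have := up_pos Hpos; have := up_pos Hpos'; lia.
have [A1 A2] := archimed ((a + B) / h); have [A1' A2'] := archimed ((a' + B) / h).
rewrite Hup in A1 A2.
have -> : a - a' = h * ((a + B) / h - (a' + B) / h) by field; lra.
by apply: Rabs_def1; nra.
Qed.

Lemma ncells_le : INR ncells <= 2 * B / h + 2.
Proof.
have Hpos : 0 <= 2 * B / h by apply: div_ge0; lra.
by rewrite /ncells S_INR INR_up //; have [_ ?] := archimed (2 * B / h); lra.
Qed.
End Cells.

(* Counting by grid cells: a family of points of the cube [-B, B]^m that are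
   pairwise at distance at least h (m + 1) has at most (2B/h + 2)^m members,
   since two of them in the same cell of side h would be closer than h sqrt m. *)
Lemma grid_packing (I : finType) m (z : I -> vec m) B h :
  0 < B -> 0 < h -> (forall i j, Rabs (z i j) <= B) ->
  (forall i i', i <> i' -> h * (INR m + 1) <= enorm (vsub (z i) (z i'))) ->
  INR #|I| <= (2 * B / h + 2) ^ m.
Proof.
move=> hB hh Hbox Hsep.
pose code (i : I) : {ffun 'I_m -> 'I_(ncells B h)} :=
  [ffun j : 'I_m => Ordinal (cell_lt hh (Hbox i j))].
have code_inj : injective code.
  move=> i i' Ecode; case: (eqVneq i i') => // Hne; exfalso.
  have close j : Rabs (vsub (z i) (z i') j) <= h.
    have := congr1 (fun f : {ffun 'I_m -> 'I_(ncells B h)} => val (f j)) Ecode.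
    rewrite !ffunE /=.
    by move/(cell_close hh (Hbox i j) (Hbox i' j)); rewrite /vsub; lra.
  set e := enorm (vsub (z i) (z i')).
  have sep : h * (INR m + 1) <= e := Hsep _ _ (elimN eqP Hne).
  have box : e * e <= INR m * (h * h) by rewrite enorm_sq; exact: dot_le_box.
  have sq_sep : (h * (INR m + 1)) * (h * (INR m + 1)) <= e * e.
    by apply: Rmult_le_compat => //; have := pos_INR m; nra.
  have : 0 < h * h * (INR m * INR m + INR m + 1) by have := pos_INR m; nra.
  lra.
have := leq_card code code_inj; rewrite card_ffun !card_ord => /leP /le_INR.
rewrite INR_expn => Hcard; apply: Rle_trans Hcard _.
by apply: pow_incr; split; [exact: pos_INR | exact: ncells_le].
Qed.

Lemma finite_gap (I : finType) (f : I -> R) c :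
  (forall i, c < f i) -> exists g, c < g /\ forall i, g <= f i.
Proof.
move=> Hf.
suff [g [Hcg Hg]] : exists g, c < g /\ forall i, i \in enum I -> g <= f i.
  by exists g; split => // i; apply: Hg; rewrite mem_enum.
elim: (enum I) => [|a s [g [Hcg Hg]]]; first by exists (c + 1); split; [lra|].
exists (Rmin (f a) g); split; first exact: Rmin_glb_lt.
move=> i; rewrite inE => /orP [/eqP -> | Hi]; first exact: Rmin_l.
exact: Rle_trans (Rmin_r _ _) (Hg i Hi).
Qed.

Definition ratio (r del : R) : R := (2 * r + del) / del.

Lemma ratio_gt1 r del : 0 < r -> 0 < del -> 1 < ratio r del.
Proof.
move=> hr hdel; rewrite /ratio.
by apply: (Rmult_lt_reg_r del) => //; rewrite /Rdiv Rmult_assoc Rinv_l; lra.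
Qed.

(* Tensor-power trick.  A word s = i_1 ... i_k is sent to
   expand s = mu y_(i_1) + mu^2 y_(i_2) + ... + mu^k y_(i_k), mu = 1 / ratio r del.
   These N^k points lie in the ball of radius del/2 and are pairwise
   mu^k (g - del) apart, so grid counting bounds N^k; letting k grow removes
   the loss of the crude grid bound. *)
Section Amplify.
Variables (m N : nat) (y : 'I_N -> vec m) (r del g : R).
Hypotheses (hr : 0 < r) (hdel : 0 < del) (hg : del < g).
Hypothesis hy : forall i, enorm (y i) <= r.
Hypothesis hsep : forall i j, i <> j -> g <= enorm (vsub (y i) (y j)).

Fixpoint expand (s : list 'I_N) : vec m :=
  match s with
  | [::] => vzero
  | i :: s' => vscal (/ ratio r del) (vadd (y i) (expand s'))
  end.

Lemma contraction_bounds : 0 < / ratio r del < 1.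
Proof.
have H1 := ratio_gt1 hr hdel.
by split; [apply: Rinv_0_lt_compat | rewrite -Rinv_1; apply: Rinv_lt_contravar]; lra.
Qed.

(* Encoded words lie in the ball of radius del / 2, as mu (r + del/2) = del/2. *)
Lemma expand_bound s : enorm (expand s) <= del / 2.
Proof.
have [mu0 _] := contraction_bounds.
elim: s => [|i s IH] /=; first by rewrite enorm_zero; lra.
rewrite enorm_scal Rabs_pos_eq; last lra.
apply: (Rle_trans _ (/ ratio r del * (r + del / 2))).
  by apply: Rmult_le_compat_l; [lra | apply: Rle_trans (enorm_add_le _ _) _; have := hy i; lra].
by apply: Req_le; rewrite /ratio; field; lra.
Qed.

(* Distinct words of equal length k are mu^k (g - del) apart: at the first
   differing letter the y-terms are g apart while the tails differ by <= del. *)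
Lemma expand_sep s s' : size s = size s' -> s <> s' ->
  (/ ratio r del) ^ size s * (g - del) <= enorm (vsub (expand s) (expand s')).
Proof.
have [mu0 mu1] := contraction_bounds; set mu := / ratio r del in mu0 mu1 *.
elim: s s' => [|i s IH] [|i' s'] //= [Hsize] Hne.
have Hpow : 0 <= mu ^ size s <= 1 by split; [apply: pow_le | apply: pow_le1]; lra.
have -> : vsub (vscal mu (vadd (y i) (expand s))) (vscal mu (vadd (y i') (expand s'))) =
          vscal mu (vadd (vsub (y i) (y i')) (vsub (expand s) (expand s'))).
  by apply: functional_extensionality => j; rewrite /vsub /vscal /vadd; ring.
rewrite enorm_scal Rabs_pos_eq ?Rmult_assoc; last lra.
apply: Rmult_le_compat_l; first lra.
case: (eqVneq i i') => [Eii | Hii]; first subst i'.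
  have -> : vadd (vsub (y i) (y i)) (vsub (expand s) (expand s')) = vsub (expand s) (expand s').
    by apply: functional_extensionality => j; rewrite /vsub /vadd; ring.
  by apply: IH => // Es; apply: Hne; rewrite Es.
have far := hsep (elimN eqP Hii).
have := enorm_add_ge (vsub (y i) (y i')) (vsub (expand s) (expand s')).
have := enorm_sub_le (expand s) (expand s').
have := expand_bound s; have := expand_bound s'; nra.
Qed.

Lemma word_count k :
  INR N ^ k <= ((del * (INR m + 1) / (g - del) + 2) * ratio r del ^ k) ^ m.
Proof.
have lamk : 1 <= ratio r del ^ k by apply: pow_R1_Rle; have := ratio_gt1 hr hdel; lra.
have hm : 0 < INR m + 1 by have := pos_INR m; lra.
set h := (/ ratio r del) ^ k * (g - del) / (INR m + 1).
have hh : 0 < h.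
  have [mu0 _] := contraction_bounds.
  by apply: Rdiv_lt_0_compat => //; apply: Rmult_lt_0_compat; [apply: pow_lt|]; lra.
have box (t : k.-tuple 'I_N) j : Rabs (expand t j) <= del / 2.
  exact: Rle_trans (coord_le _ j) (expand_bound t).
have sep (t t' : k.-tuple 'I_N) : t <> t' -> h * (INR m + 1) <= enorm (vsub (expand t) (expand t')).
  move=> Ht; have -> : h * (INR m + 1) = (/ ratio r del) ^ size t * (g - del).
    by rewrite size_tuple /h; field; lra.
  apply: expand_sep; first by rewrite !size_tuple.
  by move=> Et; apply: Ht; apply: val_inj.
have := grid_packing (Rlt_gt _ _ (Rdiv_lt_0_compat _ _ hdel Rlt_0_2)) hh box sep.
rewrite card_tuple card_ord INR_expn => Hcount; apply: Rle_trans Hcount _.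
have -> : 2 * (del / 2) / h = del * (INR m + 1) / (g - del) * ratio r del ^ k.
  by rewrite /h pow_inv; field; repeat split; lra.
have : 0 <= del * (INR m + 1) / (g - del) by apply: div_ge0; [apply: Rmult_le_pos|]; lra.
by move=> C0; apply: pow_incr; split; nra.
Qed.
End Amplify.

(* The gap g > del comes from
   finiteness; for k large enough word_count gives
   N^k <= C^m lam^(k m) < lam^(k (m + 1)). *)
Lemma packing m N (y : 'I_N -> vec m) r del :
  0 < r -> 0 < del -> (forall i, enorm (y i) <= r) ->
  (forall i j, i <> j -> del < enorm (vsub (y i) (y j))) ->
  INR N < ratio r del ^ m.+1.
Proof.
move=> hr hdel hy hsep.
(* Diagonal pairs get a dummy distance above del. *)
pose dist (p : 'I_N * 'I_N) := if p.1 == p.2 then del + 1 else enorm (vsub (y p.1) (y p.2)).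
have [g [hg Hg]] : exists g, del < g /\ forall p, g <= dist p.
  apply: finite_gap => -[i j]; rewrite /dist /=.
  by case: eqVneq => [_ | Hij]; [lra | exact: hsep (elimN eqP Hij)].
have gsep i j : i <> j -> g <= enorm (vsub (y i) (y j)).
  by move=> Hij; have := Hg (i, j); rewrite /dist /=; case: eqVneq.
set lam := ratio r del; have lam1 : 1 < lam := ratio_gt1 hr hdel.
set C := del * (INR m + 1) / (g - del) + 2.
have [k Hk] : exists k, C ^ m < lam ^ k.
  have lam_abs : Rabs lam > 1 by rewrite Rabs_pos_eq; lra.
  have [k Hk] := Pow_x_infinity lam lam_abs (C ^ m + 1).
  by exists k; move: (Hk k (le_n k)); rewrite Rabs_pos_eq; [lra | apply: pow_le; lra].
have count := word_count hr hdel hg hy gsep k; rewrite Rpow_mult_distr -/lam -/C in count.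
apply: Rnot_le_lt => HN.
have : (lam ^ m.+1) ^ k <= INR N ^ k by apply: pow_incr; split; [apply: pow_le; lra | exact: HN].
rewrite -!pow_mult Nat.mul_comm pow_mult /=.
have : 0 < (lam ^ k) ^ m by apply: pow_lt; apply: pow_lt; lra.
nra.
Qed.

(* Orthogonal projection onto the span of an orthogonal family w_1..w_m of
   R^d, computed through the normalized directions e_j (e_j = 0 if w_j = 0);
   coords x lists the coordinates of that projection, an isometric copy in R^m. *)
Section Projection.
Variables (d m : nat) (w : 'I_m -> vec d).
Hypothesis w_orth : forall j j', j <> j' -> dot (w j) (w j') = 0.

Definition dir (j : 'I_m) : vec d := vscal (/ sqrt (dot (w j) (w j))) (w j).
Definition coords (x : vec d) : vec m := fun j => dot x (dir j).
Definition proj (x : vec d) : vec d :=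
  fun i => \big[Rplus/0]_(j < m) (dot x (dir j) * dir j i).

Lemma dir_orth j j' : j <> j' -> dot (dir j) (dir j') = 0.
Proof.
move=> Hjj; have w0 : dot (w j') (w j) = 0 by apply: w_orth => E; apply: Hjj.
by rewrite /dir dot_scall dot_comm dot_scall w0 !Rmult_0_r.
Qed.

(* Each direction is a unit vector or zero; either way this identity holds. *)
Lemma dir_idem x j : dot x (dir j) * dot (dir j) (dir j) = dot x (dir j).
Proof.
have [w_pos|w0] : 0 < dot (w j) (w j) \/ 0 = dot (w j) (w j) by have := dot_ge0 (w j); lra.
- have -> : dot (dir j) (dir j) = 1.
    have s_pos := sqrt_lt_R0 _ w_pos; have ss := sqrt_sqrt _ (Rlt_le _ _ w_pos).
    rewrite /dir dot_scall dot_comm dot_scall.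
    by move: s_pos ss; set s := sqrt _ => s_pos <-; field; lra.
  ring.
- have dir0 i : dir j i = 0 by rewrite /dir /vscal (dot_eq0 (esym w0)) Rmult_0_r.
  by rewrite /dot big1 ?Rmult_0_l // => i _; rewrite dir0 Rmult_0_r.
Qed.

(* w_j is a multiple of its direction, so orthogonality to dir j gives
   orthogonality to w j. *)
Lemma w_dir j : w j = vscal (sqrt (dot (w j) (w j))) (dir j).
Proof.
apply: functional_extensionality => i; rewrite /dir /vscal.
have [w_pos|w0] : 0 < dot (w j) (w j) \/ 0 = dot (w j) (w j) by have := dot_ge0 (w j); lra.
- by field; apply: Rgt_not_eq; apply: sqrt_lt_R0.
- by rewrite (dot_eq0 (esym w0)) !Rmult_0_r.
Qed.

Lemma dot_proj x z :
  dot (proj x) z = \big[Rplus/0]_(j < m) (dot x (dir j) * dot (dir j) z).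
Proof.
rewrite {1}/dot /proj.
under eq_bigr => i _ do rewrite Rmult_comm -sum_scal.
rewrite exchange_big /=; apply: eq_bigr => j _.
by rewrite /dot -sum_scal; apply: eq_bigr => i _ /=; ring.
Qed.

Lemma proj_dir x l : dot (proj x) (dir l) = dot x (dir l).
Proof.
rewrite dot_proj (@sum_single _ _ l); first exact: dir_idem.
by move=> j /eqP Hjl; rewrite dir_orth ?Rmult_0_r.
Qed.

Lemma residual_orth x l : dot (vsub x (proj x)) (w l) = 0.
Proof. by rewrite dot_comm w_dir dot_scall dot_comm dot_subl proj_dir; ring. Qed.

Lemma dot_proj_self x : dot (proj x) (proj x) = dot (coords x) (coords x).
Proof. by rewrite dot_proj; apply: eq_bigr => j _; rewrite (dot_comm (dir j)) proj_dir. Qed.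

Lemma dot_proj_x x : dot (proj x) x = dot (coords x) (coords x).
Proof. by rewrite dot_proj; apply: eq_bigr => j _; rewrite (dot_comm (dir j)). Qed.

Lemma enorm_coords_le x : enorm (coords x) <= enorm x.
Proof.
apply: sqrt_le_1_alt; have := dot_ge0 (vsub x (proj x)).
by rewrite dot_vsub_sq (dot_comm x) dot_proj_x dot_proj_self; lra.
Qed.

Lemma enorm_proj x : enorm (proj x) = enorm (coords x).
Proof. by rewrite /enorm dot_proj_self. Qed.

Lemma coords_sub x z : coords (vsub x z) = vsub (coords x) (coords z).
Proof. by apply: functional_extensionality => j; rewrite /coords /vsub dot_subl. Qed.
End Projection.

Definition split_pair d (T : vec d -> Prop) (eps r : R) (t s u v : vec d) : Prop :=
  T t /\ T s /\ vsub t s <> (fun _ => 0) /\ vsub t s = vadd u v /\ enorm v <= eps * r.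

Lemma vsub_neq0 d (t s : vec d) : t <> s -> vsub t s <> (fun _ => 0).
Proof.
move=> Hts Hsub; apply: Hts; apply: functional_extensionality => i.
by have := congr1 (fun f => f i) Hsub; rewrite /vsub /=; lra.
Qed.

(* One step of the construction: given orthogonal w_1..w_m with m < n, the
   projections of the (2/eps + 1)^n points of T to span(w) cannot be
   (eps r)-separated by the packing bound, so two of them are close; their
   difference splits into a part orthogonal to every w_j and its (short)
   projection onto span(w). *)
Lemma orthogonal_step d m n r eps (T : vec d -> Prop) (w : 'I_m -> vec d) :
  0 < r -> 0 < eps -> (m < n)%nat -> (forall x, T x -> enorm x <= r) ->
  card_ge T ((2 / eps + 1) ^ n) ->
  (forall j j', j <> j' -> dot (w j) (w j') = 0) ->
  exists t s u v, split_pair T eps r t s u v /\ forall j, dot u (w j) = 0.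
Proof.
move=> hr heps hmn hT [l [l_nodup [l_T l_size]]] w_orth.
pose pt (i : 'I_(length l)) := List.nth i l vzero.
have pt_T i : T (pt i) by apply/l_T/nth_In/ltP.
pose y i := coords w (pt i).
have y_ball i : enorm (y i) <= r.
  exact: Rle_trans (enorm_coords_le w_orth _) (hT _ (pt_T i)).
have [[i [j [Hij Hclose]]] | Hfar] :=
  classic (exists i j, i <> j /\ enorm (vsub (y i) (y j)) <= eps * r).
- exists (pt i), (pt j), (vsub (vsub (pt i) (pt j)) (proj w (vsub (pt i) (pt j)))),
    (proj w (vsub (pt i) (pt j))).
  split; last by move=> k; apply: residual_orth.
  split; first exact: pt_T. split; first exact: pt_T.
  split.
    apply: vsub_neq0 => Ept; apply: Hij; apply: val_inj.
    have [lt_i lt_j] := (elimT ltP (ltn_ord i), elimT ltP (ltn_ord j)).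
    exact: (proj1 (NoDup_nth l vzero) l_nodup _ _ lt_i lt_j Ept).
  split; first by apply: functional_extensionality => k; rewrite /vadd /vsub /=; ring.
  by rewrite (enorm_proj w_orth) coords_sub.
- exfalso.
  have sep i j : i <> j -> eps * r < enorm (vsub (y i) (y j)).
    by move=> Hij; apply: Rnot_le_lt => Hle; apply: Hfar; exists i, j.
  have := packing hr (Rmult_lt_0_compat _ _ heps hr) y_ball sep.
  have -> : ratio r (eps * r) = 2 / eps + 1 by rewrite /ratio; field; lra.
  have : (2 / eps + 1) ^ m.+1 <= (2 / eps + 1) ^ n.
    apply: Rle_pow; last exact/leP.
    by have := Rdiv_lt_0_compat _ _ Rlt_0_2 heps; lra.
  lra.
Qed.

Lemma orthogonal_pairs d n r eps (T : vec d -> Prop) :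
  0 < r -> 0 < eps -> (forall x, T x -> enorm x <= r) ->
  card_ge T ((2 / eps + 1) ^ n) ->
  forall m, (m <= n)%nat -> exists t s u v : nat -> vec d,
    (forall k, (k < m)%nat -> split_pair T eps r (t k) (s k) (u k) (v k)) /\
    (forall k k', (k' < k < m)%nat -> dot (u k) (u k') = 0).
Proof.
move=> hr heps hT hcard; elim=> [|m IH] hmn.
  exists (fun _ => vzero), (fun _ => vzero), (fun _ => vzero), (fun _ => vzero).
  by split=> [k | k k' /andP [_]]; rewrite ltn0.
have [t [s [u [v [Hsplit Horth]]]]] := IH (ltnW hmn).
have w_orth (j j' : 'I_m) : j <> j' -> dot (u j) (u j') = 0.
  move=> Hjj; have : val j <> val j' by move=> /val_inj.
  case: (ltngtP j j') => // [lt_jj' | lt_j'j] _.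
  - by rewrite dot_comm; apply: Horth; rewrite lt_jj' ltn_ord.
  - by apply: Horth; rewrite lt_j'j ltn_ord.
have [t0 [s0 [u0 [v0 [Hsplit0 Horth0]]]]] := orthogonal_step hr heps hmn hT hcard w_orth.
pose ext (f : nat -> vec d) x k := if (k < m)%nat then f k else x.
exists (ext t t0), (ext s s0), (ext u u0), (ext v v0); split.
- move=> k; rewrite ltnS leq_eqVlt /ext => /orP [/eqP -> | lt_km].
    by rewrite ltnn.
  by rewrite lt_km; exact: Hsplit.
- move=> k k' /andP [lt_k'k]; rewrite ltnS leq_eqVlt /ext => /orP [/eqP Ekm | lt_km].
  + move: lt_k'k; rewrite Ekm ltnn => lt_k'm.
    by rewrite lt_k'm; apply: (Horth0 (Ordinal lt_k'm)).
  + by rewrite lt_km (ltn_trans lt_k'k lt_km); apply: Horth; rewrite lt_k'k.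
Qed.

Close Scope R_scope.

Theorem lemma3p5 (d n : nat) (r eps : R) (T : vec d -> Prop)
  (hr : (0 < r)%R) (heps0 : (0 < eps)%R) (heps1 : (eps < 1)%R) (hn : (1 <= n)%N)
  (hT : forall x, T x -> (enorm x <= r)%R)
  (hcard : card_ge T ((2 / eps + 1) ^ n)%R) :
  exists (t s u v : 'I_n -> vec d),
    (forall k, T (t k) /\ T (s k) /\ vsub (t k) (s k) <> (fun _ => 0%R)
               /\ vsub (t k) (s k) = vadd (u k) (v k)
               /\ (enorm (v k) <= eps * r)%R) /\
    (forall k l, k <> l -> dot (u k) (u l) = 0%R).
Proof.
have [t [s [u [v [Hsplit Horth]]]]] := orthogonal_pairs hr heps0 hT hcard (leqnn n).
exists (fun k => t k), (fun k => s k), (fun k => u k), (fun k => v k); split.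
  by move=> k; apply: Hsplit.
move=> k l Hkl; have : val k <> val l by move=> /val_inj.
case: (ltngtP k l) => // [lt_kl | lt_lk] _.
- by rewrite dot_comm; apply: Horth; rewrite lt_kl ltn_ord.
- by apply: Horth; rewrite lt_lk ltn_ord.
Qed.
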